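(* Let $X$ be a graph and $\{a,b\},\{\alpha,\beta\}\in E(X)$. If the line graph $\mathcal{L}(X)$, with adjacency Hamiltonian, admits perfect state transfer from the vertex $ab$ to the vertex $\alpha\beta$ at time $\tau$, then $X$, with signless Laplacian Hamiltonian $Q$, admits perfect state transfer from $\mathbf e_a+\mathbf e_b$ to $\mathbf e_\alpha+\mathbf e_\beta$ at time $\tau$.
   Context: The line graph $\mathcal L(X)$ has vertex set $E(X)$, two edges being adjacent iff they share an endpoint in $X$; the vertex corresponding to edge $\{a,b\}$ is written $ab$ and its vertex state $\mathbf f_{ab}$. $Q=D+A$ is the signless Laplacian of $X$. Perfect state transfer from $\mathbf u$ to $\boldsymbol\mu$ at time $\tau$ with Hamiltonian $M$ means $e^{-\mathrm{i}\tau M}\mathbf u=\eta\boldsymbol\mu$ with $|\eta|=1$. *)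

From HB Require Import structures.
From mathcomp Require Import all_boot all_order all_algebra.
From mathcomp Require Import all_classical all_reals all_analysis.
From mathcomp Require Import complex.
Set Implicit Arguments. Unset Strict Implicit. Unset Printing Implicit Defensive.
Import Order.TTheory GRing.Theory Num.Theory numFieldNormedType.Exports.
Local Open Scope ring_scope.
Local Open Scope classical_set_scope.
Local Open Scope ring_scope.


Definition simple_graph (n : nat) (adj : rel 'I_n) : Prop :=
  symmetric adj /\ irreflexive adj.

Definition edge_set (n : nat) (adj : rel 'I_n) : {set {set 'I_n}} :=
  [set A : {set 'I_n} | [exists x, exists y, adj x y && (A == finset.setU (finset.set1 x) (finset.set1 y))]].

Section Defs.
Variable R : realType.
Local Notation C := R[i].

Definition adjmx (n : nat) (adj : rel 'I_n) : 'M[C]_n :=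
  \matrix_(i, j) (adj i j)%:R.

Definition degmx (n : nat) (adj : rel 'I_n) : 'M[C]_n :=
  \matrix_(i, j) ((i == j)%:R * #|[set k | adj i k]|%:R).

Definition signless_laplacian (n : nat) (adj : rel 'I_n) : 'M[C]_n :=
  degmx adj + adjmx adj.

(* Adjacency matrix of the line graph L(X); its vertices are the edges of X,
   enumerated as 'I_#|E(X)| via enum_val. Two distinct edges are adjacent
   iff they share an endpoint. *)
Definition line_graph_adjmx (n : nat) (adj : rel 'I_n)
  : 'M[C]_(#|edge_set adj|) :=
  \matrix_(i, j)
    ((i != j) && (enum_val i :&: enum_val j != finset.set0))%:R.

Definition evec (m : nat) (i : 'I_m) : 'cV[C]_m := \col_k (k == i)%:R.

Definition expmx_partial (m : nat) (A : 'M[C]_m) (N : nat) : 'M[C]_m :=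
  \sum_(k < N) (k`!%:R)^-1 *: A ^+ k.

Definition is_expmx (m : nat) (A E : 'M[C]_m) : Prop :=
  forall i j,
    (fun N => complex.Re (expmx_partial A N i j)) @ \oo --> (complex.Re (E i j) : R) /\
    (fun N => complex.Im (expmx_partial A N i j)) @ \oo --> (complex.Im (E i j) : R).

(* Perfect state transfer from u to mu at time tau with Hamiltonian M:
   e^{-i tau M} u = eta mu with |eta| = 1. *)
Definition pst (m : nat) (M : 'M[C]_m) (u mu : 'cV[C]_m) (tau : R) : Prop :=
  exists E : 'M[C]_m,
    is_expmx ((Complex 0 (- tau)) *: M) E /\
    exists eta : C, `|eta| = 1 /\ E *m u = eta *: mu.

End Defs.

From HB Require Import structures.
From mathcomp Require Import all_boot all_order all_algebra.
From mathcomp Require Import all_classical all_reals all_analysis.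
From mathcomp Require Import complex ring lra zify.
Import Order.TTheory GRing.Theory Num.Theory numFieldNormedType.Exports.
Set Implicit Arguments. Unset Strict Implicit. Unset Printing Implicit Defensive.
Local Open Scope ring_scope.

(* Let N be the vertex-edge incidence matrix of X.  Then N N^T = Q and
   N^T N = A(L(X)) + 2I, so with c = -i tau the intertwining
   (c N N^T)^k N = N (c N^T N)^k passes to the exponential series:
   e^{cQ} N = N e^{c A(L(X))} e^{2c}.  Since N e_{ab} = e_a + e_b, applying
   this to e_{ab} turns perfect state transfer in L(X) with phase eta into
   perfect state transfer in X with phase e^{2c} eta, and |e^{2c}| = 1.
   The exponential series are handled entrywise, with the summable bound
   |A^k / k!| <= m |A|^k / k! for the l1 norm |.| of an m x m matrix. *)

Section ComplexAbs1.
Variable R : realType.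
Local Notation C := R[i].

(* Unlike the modulus, this norm needs no square roots, and it dominates
   [|Re z|] and [|Im z|], which is all the convergence arguments use. *)
Definition cabs1 (z : C) : R := `|complex.Re z| + `|complex.Im z|.

Lemma cabs1_ge0 z : 0 <= cabs1 z.
Proof. by rewrite addr_ge0. Qed.

Lemma cabs1D x y : cabs1 (x + y) <= cabs1 x + cabs1 y.
Proof.
rewrite /cabs1 !raddfD /=.
have := ler_normD (complex.Re x) (complex.Re y).
have := ler_normD (complex.Im x) (complex.Im y).
lra.
Qed.

Lemma cabs1M x y : cabs1 (x * y) <= cabs1 x * cabs1 y.
Proof.
case: x => a b; case: y => c d; rewrite /cabs1 /=.
have h1 : `|a * c - b * d| <= `|a| * `|c| + `|b| * `|d|.
  by rewrite -!normrM (le_trans (ler_normB _ _)).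
have h2 : `|a * d + b * c| <= `|a| * `|d| + `|b| * `|c|.
  by rewrite -!normrM (le_trans (ler_normD _ _)).
rewrite mulrDl !mulrDr; lra.
Qed.

Lemma cabs1_sum I (r : seq I) (P : pred I) (F : I -> C) :
  cabs1 (\sum_(i <- r | P i) F i) <= \sum_(i <- r | P i) cabs1 (F i).
Proof.
elim/big_rec2: _ => [|i y1 y2 _ h]; first by rewrite /cabs1 normr0 addr0.
by apply: le_trans (cabs1D _ _) _; rewrite lerD2l.
Qed.

Lemma cabs1_Re z : `|complex.Re z| <= cabs1 z.
Proof. by rewrite lerDl. Qed.

Lemma cabs1_Im z : `|complex.Im z| <= cabs1 z.
Proof. by rewrite lerDr. Qed.

Lemma cabs1_natV k : cabs1 (k%:R : C)^-1 = k%:R^-1.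
Proof.
rewrite -[k%:R : C](rmorph_nat (real_complex R)) -fmorphV /cabs1 /=.
by rewrite normr0 addr0 ger0_norm // invr_ge0 ler0n.
Qed.

End ComplexAbs1.

Section MatrixAbs1.
Variable R : realType.
Local Notation C := R[i].

Definition mxabs1 m p (A : 'M[C]_(m, p)) : R := \sum_i \sum_j cabs1 (A i j).

Lemma mxabs1_ge0 m p (A : 'M[C]_(m, p)) : 0 <= mxabs1 A.
Proof. by do 2![apply: sumr_ge0 => ? _]; apply: cabs1_ge0. Qed.

Lemma mxabs1_entry m p (A : 'M[C]_(m, p)) i j : cabs1 (A i j) <= mxabs1 A.
Proof.
rewrite /mxabs1 (bigD1 i) //= (bigD1 j) //= -addrA lerDl.
by apply: addr_ge0; do ?[apply: sumr_ge0 => ? _]; apply: cabs1_ge0.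
Qed.

Lemma mxabs1_0 m p : mxabs1 (0 : 'M[C]_(m, p)) = 0.
Proof. by rewrite /mxabs1 big1 // => i _; rewrite big1 // => j _; rewrite mxE /cabs1 normr0 addr0. Qed.

Lemma mxabs1D m p (A B : 'M[C]_(m, p)) : mxabs1 (A + B) <= mxabs1 A + mxabs1 B.
Proof.
rewrite /mxabs1 -big_split /=; apply: ler_sum => i _.
by rewrite -big_split /=; apply: ler_sum => j _; rewrite mxE cabs1D.
Qed.

Lemma mxabs1_sum m p I (r : seq I) (P : pred I) (F : I -> 'M[C]_(m, p)) :
  mxabs1 (\sum_(i <- r | P i) F i) <= \sum_(i <- r | P i) mxabs1 (F i).
Proof.
elim/big_rec2: _ => [|i y1 y2 _ h]; first by rewrite mxabs1_0.
by apply: le_trans (mxabs1D _ _) _; rewrite lerD2l.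
Qed.

Lemma mxabs1Z m p (z : C) (A : 'M[C]_(m, p)) : mxabs1 (z *: A) <= cabs1 z * mxabs1 A.
Proof.
rewrite /mxabs1 mulr_sumr; apply: ler_sum => i _; rewrite mulr_sumr.
by apply: ler_sum => j _; rewrite mxE cabs1M.
Qed.

Lemma mxabs1M m p q (A : 'M[C]_(m, p)) (B : 'M[C]_(p, q)) :
  mxabs1 (A *m B) <= mxabs1 A * mxabs1 B.
Proof.
rewrite /mxabs1 mulr_suml; apply: ler_sum => i _.
apply: (@le_trans _ _ (\sum_j \sum_k cabs1 (A i k) * cabs1 (B k j))).
  apply: ler_sum => j _; rewrite mxE; apply: le_trans (cabs1_sum _ _ _) _.
  by apply: ler_sum => k _; apply: cabs1M.
rewrite exchange_big /= mulr_suml; apply: ler_sum => k _.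
rewrite -mulr_sumr ler_wpM2l ?cabs1_ge0 // (bigD1 k) //= lerDl.
by do 2![apply: sumr_ge0 => ? _]; apply: cabs1_ge0.
Qed.

Lemma mxabs1_1 m : mxabs1 (1%:M : 'M[C]_m) = m%:R.
Proof.
rewrite /mxabs1 (eq_bigr (fun _ => 1)) ?sumr_const ?card_ord // => i _.
rewrite (bigD1 i) //= big1 ?addr0 => [|j /negPf ji]; rewrite mxE ?eqxx.
  by rewrite /cabs1 /= normr0 normr1 addr0.
by rewrite eq_sym ji /cabs1 normr0 addr0.
Qed.

Lemma mxabs1X m (A : 'M[C]_m) k : mxabs1 (A ^+ k) <= m%:R * mxabs1 A ^+ k.
Proof.
elim: k => [|k IH]; first by rewrite !expr0 mulr1 mxabs1_1.
rewrite exprSr -mulmxE exprSr mulrA.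
by apply: le_trans (mxabs1M _ _) _; rewrite ler_wpM2r ?mxabs1_ge0.
Qed.

End MatrixAbs1.

Section Convergence.
Variable R : realType.
Local Open Scope classical_set_scope.
Local Notation C := R[i].

Definition ccvg (u : nat -> C) (l : C) :=
  (fun n => complex.Re (u n)) @ \oo --> complex.Re l /\
  (fun n => complex.Im (u n)) @ \oo --> complex.Im l.

Lemma ccvg_cst (z : C) : ccvg (fun _ => z) z.
Proof. by split; apply: cvg_cst. Qed.

Lemma ccvgD u v a b : ccvg u a -> ccvg v b -> ccvg (fun n => u n + v n) (a + b).
Proof.
move=> [h1 h2] [h3 h4]; split.
  by under eq_fun do rewrite raddfD; rewrite raddfD; apply: cvgD.
by under eq_fun do rewrite raddfD; rewrite raddfD; apply: cvgD.
Qed.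

Lemma ccvgM u v a b : ccvg u a -> ccvg v b -> ccvg (fun n => u n * v n) (a * b).
Proof.
have ReM (x y : C) : complex.Re (x * y) =
    complex.Re x * complex.Re y - complex.Im x * complex.Im y by case: x; case: y.
have ImM (x y : C) : complex.Im (x * y) =
    complex.Re x * complex.Im y + complex.Im x * complex.Re y by case: x; case: y.
move=> [h1 h2] [h3 h4]; split.
  by under eq_fun do rewrite ReM; rewrite ReM; apply: cvgB; apply: cvgM.
by under eq_fun do rewrite ImM; rewrite ImM; apply: cvgD; apply: cvgM.
Qed.

Lemma ccvg_sum I (r : seq I) (P : pred I) (F : I -> nat -> C) (L : I -> C) :
  (forall i, ccvg (F i) (L i)) ->
  ccvg (fun n => \sum_(i <- r | P i) F i n) (\sum_(i <- r | P i) L i).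
Proof.
move=> h; elim: r => [|x r IH].
  by under eq_fun do rewrite big_nil; rewrite big_nil; apply: ccvg_cst.
under eq_fun do rewrite big_cons; rewrite big_cons.
by case: (P x) => //; apply: ccvgD.
Qed.

Lemma ccvg_conj u l : ccvg u l -> ccvg (fun n => conjc (u n)) (conjc l).
Proof.
have ReJ (x : C) : complex.Re (conjc x) = complex.Re x by case: x.
have ImJ (x : C) : complex.Im (conjc x) = - complex.Im x by case: x.
move=> [h1 h2]; split; first by under eq_fun do rewrite ReJ; rewrite ReJ.
by under eq_fun do rewrite ImJ; rewrite ImJ; apply: cvgN.
Qed.

Lemma ccvg_unique u a b : ccvg u a -> ccvg u b -> a = b.
Proof.
case: a => a1 a2; case: b => b1 b2 [h1 h2] [h3 h4] /=.
by congr Complex; [apply: cvg_unique h1 h3 | apply: cvg_unique h2 h4].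
Qed.

Lemma cvg0_le_norm (x y : nat -> R) :
  (forall n, `|x n| <= y n) -> y @ \oo --> 0 -> x @ \oo --> 0.
Proof.
move=> hb hy; apply: (@squeeze_cvgr _ _ _ _ (fun n => - y n) y) => //.
  by near=> n; have := hb n; rewrite ler_norml.
by rewrite -oppr0; apply: cvgN.
Unshelve. all: by end_near.
Qed.

Lemma ccvg_approx u v l :
  ccvg v l -> (fun n => cabs1 (v n - u n)) @ \oo --> 0 -> ccvg u l.
Proof.
move=> [h1 h2] h.
have hRe : (fun n => complex.Re (v n - u n)) @ \oo --> 0.
  by apply: cvg0_le_norm h => n; apply: cabs1_Re.
have hIm : (fun n => complex.Im (v n - u n)) @ \oo --> 0.
  by apply: cvg0_le_norm h => n; apply: cabs1_Im.
have eRe : (fun n => complex.Re (u n)) =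
    (fun n => complex.Re (v n) - complex.Re (v n - u n)).
  by apply: funext => n; rewrite raddfB opprB addrC subrK.
have eIm : (fun n => complex.Im (u n)) =
    (fun n => complex.Im (v n) - complex.Im (v n - u n)).
  by apply: funext => n; rewrite raddfB opprB addrC subrK.
by split; rewrite ?eRe ?eIm -[X in _ --> X]subr0; apply: cvgB.
Qed.

(* [is_expmx A E] unfolds to [mxcvg (expmx_partial A) E]. *)
Definition mxcvg m p (U : nat -> 'M[C]_(m, p)) (L : 'M[C]_(m, p)) :=
  forall i j, ccvg (fun n => U n i j) (L i j).

Lemma mxcvg_cst m p (A : 'M[C]_(m, p)) : mxcvg (fun _ => A) A.
Proof. by move=> i j; apply: ccvg_cst. Qed.

Lemma mxcvgM m p q (U : nat -> 'M[C]_(m, p)) (V : nat -> 'M[C]_(p, q)) L M :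
  mxcvg U L -> mxcvg V M -> mxcvg (fun n => U n *m V n) (L *m M).
Proof.
move=> hU hV i j; under eq_fun do rewrite mxE; rewrite mxE.
by apply: ccvg_sum => k; apply: ccvgM.
Qed.

Lemma mxcvg_unique m p (U : nat -> 'M[C]_(m, p)) L M :
  mxcvg U L -> mxcvg U M -> L = M.
Proof. by move=> h1 h2; apply/matrixP => i j; apply: ccvg_unique (h1 i j) (h2 i j). Qed.

Lemma mxcvg_approx m p (U V : nat -> 'M[C]_(m, p)) L :
  mxcvg V L -> (fun n => mxabs1 (V n - U n)) @ \oo --> 0 -> mxcvg U L.
Proof.
move=> hV h i j; apply: ccvg_approx (hV i j) _.
apply: cvg0_le_norm h => n; rewrite ger0_norm ?cabs1_ge0 //.
by have := mxabs1_entry (V n - U n) i j; rewrite !mxE.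
Qed.

End Convergence.

Section CauchyCorner.
Variable R : realType.
Local Open Scope classical_set_scope.

(* The terms of [series a K * series b K] that are missing from the K-th
   partial sum of the Cauchy product of [a] and [b]. *)
Definition cauchy_corner (a b : nat -> R) K :=
  \sum_(0 <= j < K) \sum_(0 <= i < K) (if (K <= j + i)%N then a j * b i else 0).

Lemma big_nat_if_geq (V : nmodType) (F : nat -> V) h K : (h <= K)%N ->
  \sum_(0 <= j < K) (if (h <= j)%N then F j else 0) = \sum_(h <= j < K) F j.
Proof.
move=> hK; rewrite (big_cat_nat (leq0n h) hK) /= big1_seq ?add0r => [|j].
  by apply: eq_big_nat => j /andP[-> _].
by rewrite mem_index_iota => /andP[_ /andP[_ jh]]; rewrite leqNgt jh.
Qed.

Variables a b : nat -> R.
Hypotheses (a_ge0 : forall j, 0 <= a j) (b_ge0 : forall i, 0 <= b i).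

(* A corner term has [j] or [i] at least [K %/ 2]. *)
Lemma cauchy_corner_le K :
  cauchy_corner a b K <=
  (series a K - series a (K %/ 2)%N) * series b K +
  series a K * (series b K - series b (K %/ 2)%N).
Proof.
set h := (K %/ 2)%N; have hK : (h <= K)%N by rewrite /h; lia.
rewrite !sub_series_geq // !seriesEnat /=.
rewrite -(big_nat_if_geq a hK) -(big_nat_if_geq b hK).
rewrite !big_distrlr -big_split /=; apply: ler_sum => j _.
rewrite -big_split /=; apply: ler_sum => i _.
have ab0 := mulr_ge0 (a_ge0 j) (b_ge0 i).
case: ifP => [hji|_]; last by rewrite addr_ge0 //; case: ifP; rewrite ?mul0r ?mulr0.
have [hj|hj] := leqP h j; first by rewrite lerDl; case: ifP; rewrite ?mulr0.
by rewrite mul0r add0r ifT //; lia.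
Qed.

Lemma cauchy_corner_cvg0 :
  cvgn (series a) -> cvgn (series b) -> cauchy_corner a b @ \oo --> 0.
Proof.
move=> ha hb.
have half_oo : (fun K => (K %/ 2)%N) @ \oo --> \oo.
  by apply/cvgnyPge => A; exists (2 * A)%N => // x /= hx; lia.
pose g K := (series a K - series a (K %/ 2)%N) * series b K +
  series a K * (series b K - series b (K %/ 2)%N).
have g0 : g @ \oo --> 0.
  have -> : 0 = (limn (series a) - limn (series a)) * limn (series b) +
      limn (series a) * (limn (series b) - limn (series b)).
    by rewrite !subrr mul0r mulr0 addr0.
  by apply: cvgD; apply: cvgM => //; apply: cvgB => //; apply: cvg_comp half_oo _.
apply: (squeeze_cvgr _ _ g0); last exact: cvg_cst.
near=> K; rewrite cauchy_corner_le andbT.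
by do 2![apply: sumr_ge0 => ? _]; case: ifP => // _; apply: mulr_ge0.
Unshelve. all: by end_near.
Qed.

End CauchyCorner.

Lemma big_antidiagonal (V : nmodType) K (f : nat -> nat -> V) :
  \sum_(0 <= k < K) \sum_(0 <= i < k.+1) f (k - i)%N i =
  \sum_(0 <= j < K) \sum_(0 <= i < K) (if (j + i < K)%N then f j i else 0).
Proof.
rewrite [RHS]exchange_big /=.
have row_k k : (0 <= k < K)%N -> \sum_(0 <= i < k.+1) f (k - i)%N i =
    \sum_(0 <= i < K) (if (i <= k)%N then f (k - i)%N i else 0).
  move=> /andP[_ kK]; rewrite (big_cat_nat (leq0n k.+1) kK) /=.
  rewrite [X in _ = _ + X]big1_seq ?addr0 => [|i]; last first.
    by rewrite mem_index_iota => /andP[_ /andP[ki _]]; rewrite leqNgt ki.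
  by apply: eq_big_nat => i /andP[_ ik]; rewrite -ltnS ik.
rewrite (eq_big_nat _ _ row_k) exchange_big /=; apply: eq_big_nat => i /andP[_ iK].
rewrite (big_cat_nat (leq0n i) (ltnW iK)) /= big1_seq ?add0r => [|k]; last first.
  by rewrite mem_index_iota => /andP[_ /andP[_ ki]]; rewrite leqNgt ki.
rewrite -{1}(add0n i) big_addn (big_cat_nat (leq0n (K - i)) (leq_subr i K)) /=.
rewrite [X in _ = _ + X]big1_seq ?addr0 => [|j]; last first.
  by rewrite mem_index_iota => /andP[_ /andP[Kj _]]; rewrite ifF //; apply/negbTE; lia.
apply: eq_big_nat => j /andP[_ jK]; rewrite leq_addl addnK ifT //; lia.
Qed.

Section MatrixExponential.
Variable R : realType.
Local Open Scope classical_set_scope.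
Local Notation C := R[i].

Definition expmx_term m (A : 'M[C]_m) k := (k`!%:R)^-1 *: A ^+ k.

Lemma expmx_partialE m (A : 'M[C]_m) K :
  expmx_partial A K = \sum_(0 <= k < K) expmx_term A k.
Proof. by rewrite big_mkord. Qed.

Lemma expmx_term_bound m (A : 'M[C]_m) k :
  mxabs1 (expmx_term A k) <= m%:R * exp_coeff (mxabs1 A) k.
Proof.
apply: le_trans (mxabs1Z _ _) _; rewrite cabs1_natV /exp_coeff /= mulrA mulrC.
by apply: ler_wpM2r; rewrite ?mxabs1X // invr_ge0 ler0n.
Qed.

Lemma expmx_exists m (A : 'M[C]_m) : exists E, is_expmx A E.
Proof.
set w := m%:R *: exp_coeff (mxabs1 A).
have w_sum : cvgn (series w) by apply/is_cvg_seriesZ/is_cvg_series_exp_coeff.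
have dom (u : nat -> R) : (forall k, `|u k| <= w k) -> cvgn (series u).
  move=> uw; apply: normed_cvg; apply: (series_le_cvg _ _ _ w_sum) => //= k.
  exact: le_trans (normr_ge0 _) (uw k).
have bound i j k : cabs1 (expmx_term A k i j) <= w k.
  exact: le_trans (mxabs1_entry _ i j) (expmx_term_bound A k).
pose re i j := series (fun k => complex.Re (expmx_term A k i j)).
pose im i j := series (fun k => complex.Im (expmx_term A k i j)).
exists (\matrix_(i, j) Complex (limn (re i j)) (limn (im i j))) => i j.
rewrite mxE /=; split.
- have -> : (fun N => complex.Re (expmx_partial A N i j)) = re i j.
    by apply: funext => N; rewrite expmx_partialE summxE raddf_sum.
  by apply: dom => k; apply: le_trans (cabs1_Re _) (bound i j k).
- have -> : (fun N => complex.Im (expmx_partial A N i j)) = im i j.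
    by apply: funext => N; rewrite expmx_partialE summxE raddf_sum.
  by apply: dom => k; apply: le_trans (cabs1_Im _) (bound i j k).
Qed.

Lemma expmx_termD m (Y Z : 'M[C]_m) k : GRing.comm Y Z ->
  expmx_term (Y + Z) k =
  \sum_(0 <= i < k.+1) expmx_term Y (k - i) *m expmx_term Z i.
Proof.
move=> cYZ; rewrite /expmx_term exprDn_comm // scaler_sumr big_mkord.
apply: eq_bigr => i _; rewrite -(scaler_nat 'C(k, i)) scalerA -scalemxAl -scalemxAr scalerA.
have ik : (i <= k)%N by rewrite -ltnS.
congr (_ *: _).
have fact_neq0 l : (l`!%:R : C) != 0 by rewrite pnatr_eq0 -lt0n fact_gt0.
rewrite -(bin_fact ik) !natrM; field.
by rewrite !fact_neq0 pnatr_eq0 -lt0n bin_gt0 ik.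
Qed.

Lemma expmx_partialD_defect m (Y Z : 'M[C]_m) K : GRing.comm Y Z ->
  expmx_partial Y K *m expmx_partial Z K - expmx_partial (Y + Z) K =
  \sum_(0 <= j < K) \sum_(0 <= i < K)
    (if (K <= j + i)%N then expmx_term Y j *m expmx_term Z i else 0).
Proof.
move=> cYZ; rewrite !expmx_partialE (eq_bigr _ (fun k _ => expmx_termD k cYZ)).
rewrite (big_antidiagonal K (fun j i => expmx_term Y j *m expmx_term Z i)).
rewrite mulmx_suml -sumrB; apply: eq_bigr => j _.
rewrite mulmx_sumr -sumrB; apply: eq_bigr => i _.
by rewrite ltnNge; case: leqP; rewrite ?subr0 ?subrr.
Qed.

Lemma expmxD m (Y Z EY EZ : 'M[C]_m) : GRing.comm Y Z ->
  is_expmx Y EY -> is_expmx Z EZ -> is_expmx (Y + Z) (EY *m EZ).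
Proof.
move=> cYZ hY hZ; apply: (mxcvg_approx (mxcvgM hY hZ)).
pose bound x : R^nat := m%:R *: exp_coeff x.
have bound_ge0 (A : 'M[C]_m) k : 0 <= bound (mxabs1 A) k.
  exact: mulr_ge0 (ler0n _ _) (exp_coeff_ge0 _ (mxabs1_ge0 A)).
have bound_sum x : cvgn (series (bound x)).
  exact/is_cvg_seriesZ/is_cvg_series_exp_coeff.
apply: (squeeze_cvgr _ (cvg_cst 0)
  (cauchy_corner_cvg0 (bound_ge0 Y) (bound_ge0 Z) (bound_sum _) (bound_sum _))).
near=> K; rewrite mxabs1_ge0 /= expmx_partialD_defect //.
apply: le_trans (mxabs1_sum _ _ _) _; apply: ler_sum => j _.
apply: le_trans (mxabs1_sum _ _ _) _; apply: ler_sum => i _.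
case: ifP => _; last by rewrite mxabs1_0.
by apply: le_trans (mxabs1M _ _) _; rewrite ler_pM ?mxabs1_ge0 ?expmx_term_bound.
Unshelve. all: by end_near.
Qed.

End MatrixExponential.

Section ScalarExponential.
Variable R : realType.
Local Open Scope classical_set_scope.
Local Notation C := R[i].

Lemma scalar_mxX p (z : C) k : (z%:M : 'M[C]_p) ^+ k = (z ^+ k)%:M.
Proof.
elim: k => [|k IH]; first by rewrite !expr0.
by rewrite !exprSr IH -mulmxE -scalar_mxM.
Qed.

Definition exp_partial (z : C) K := \sum_(k < K) (k`!%:R)^-1 * z ^+ k.

Lemma expmx_partial_scalar p (z : C) K :
  expmx_partial (z%:M : 'M[C]_p) K = (exp_partial z K)%:M.
Proof.
rewrite /expmx_partial /exp_partial raddf_sum; apply: eq_bigr => k _.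
by rewrite scalar_mxX scale_scalar_mx.
Qed.

Lemma exp_partial_conj z K : conjc (exp_partial z K) = exp_partial (conjc z) K.
Proof.
rewrite rmorph_sum; apply: eq_bigr => k _.
by rewrite rmorphM fmorphV rmorph_nat rmorphXn.
Qed.

Lemma exp_partial0_cvg : ccvg (exp_partial 0) 1.
Proof.
have exp_partial0 K : exp_partial 0 K.+1 = 1.
  rewrite /exp_partial big_ord_recl big1 => [|k _]; last by rewrite expr0n mulr0.
  by rewrite expr0 fact0 invr1 mulr1 addr0.
split; apply: cvg_near_cst; exists 1%N => // K /= hK;
  by rewrite -(prednK hK) exp_partial0.
Qed.

Lemma exp_partial_cvg z (E : 'M[C]_1) :
  is_expmx z%:M E -> ccvg (exp_partial z) (E 0 0).
Proof.
move=> hE; have := hE 0 0; congr ccvg; apply: funext => K.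
by rewrite expmx_partial_scalar mxE mulr1n.
Qed.

Lemma expmx_scalar (z : C) : exists w : C,
  ccvg (exp_partial z) w /\ forall p, is_expmx (z%:M : 'M[C]_p) w%:M.
Proof.
have [E hE] := expmx_exists (z%:M : 'M[C]_1).
exists (E 0 0); split => [|p i j]; first exact: exp_partial_cvg.
change (ccvg (fun K => expmx_partial (z%:M : 'M[C]_p) K i j) ((E 0 0)%:M i j)).
under eq_fun do rewrite expmx_partial_scalar mxE.
by rewrite mxE; case: (i == j); [exact: exp_partial_cvg | exact: ccvg_cst].
Qed.

(* For purely imaginary [z], the limits of the exponential series at [z] and
   [- z] are complex conjugate, and their product is [e^0 = 1]. *)
Lemma expmx_scalar_unit (z : C) : conjc z = - z ->
  exists w : C, `|w| = 1 /\ forall p, is_expmx (z%:M : 'M[C]_p) w%:M.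
Proof.
move=> zJ; have [w [hw hwM]] := expmx_scalar z.
have [w' [hw' hw'M]] := expmx_scalar (- z).
have w'E : w' = conjc w.
  apply: ccvg_unique hw' _; rewrite -zJ.
  have -> : exp_partial (conjc z) = fun K => conjc (exp_partial z K).
    by apply: funext => K; rewrite exp_partial_conj.
  exact: ccvg_conj.
have h0 := expmxD (scalar_mxC _ _) (hwM 1%N) (hw'M 1%N).
rewrite -raddfD /= subrr -scalar_mxM in h0.
have ww' := ccvg_unique exp_partial0_cvg (exp_partial_cvg h0).
exists w; split => //; apply/eqP; rewrite -sqrp_eq1 ?normr_ge0 //.
by rewrite sqr_normc -w'E ww' mxE mulr1n.
Qed.

End ScalarExponential.

Section Edges.
Variables (n : nat) (adj : rel 'I_n).
Hypotheses (adj_sym : symmetric adj) (adj_irr : irreflexive adj).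

Lemma edge_setP A :
  reflect (exists x y, adj x y /\ A = [set x; y]%SET) (A \in edge_set adj).
Proof.
rewrite inE; apply: (iffP existsP) => [[x /existsP[y /andP[hxy /eqP ->]]]|].
  by exists x, y.
by move=> [x [y [hxy ->]]]; exists x; apply/existsP; exists y; rewrite hxy eqxx.
Qed.

Lemma adj_neq x y : adj x y -> x != y.
Proof. by apply: contraTneq => ->; rewrite adj_irr. Qed.

Lemma card_edge A : A \in edge_set adj -> #|A| = 2.
Proof. by move=> /edge_setP[x [y [hxy ->]]]; rewrite cards2 adj_neq. Qed.

Lemma card_edgeI A B : A \in edge_set adj -> B \in edge_set adj -> A != B ->
  (#|A :&: B| <= 1)%N.
Proof.
move=> hA hB; apply: contraNleq => AB2.
have AB_A : A :&: B = A by apply/eqP; rewrite eqEcard subsetIl card_edge.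
by rewrite eqEcard -{1}AB_A subsetIr (card_edge hA) (card_edge hB).
Qed.

Lemma card_edges_at u :
  #|[set A in edge_set adj | u \in A]| = #|[set v | adj u v]|.
Proof.
have -> : [set A in edge_set adj | u \in A] = [set [set u; v]%SET | v in [set v | adj u v]].
  apply/setP => A; rewrite inE; apply/andP/imsetP => [[/edge_setP[x [y [hxy ->]]]]|].
    rewrite !inE => /orP[] /eqP ->; [exists y | exists x]; rewrite ?inE //.
      by rewrite (adj_sym y x).
    by rewrite finset.setUC.
  move=> [v]; rewrite inE => huv ->; split; last by rewrite !inE eqxx.
  by apply/edge_setP; exists u, v.
apply: card_in_imset => v v'; rewrite !inE => huv huv' e.
have : v \in [set u; v']%SET by rewrite -e !inE eqxx orbT.
by rewrite !inE eq_sym (negPf (adj_neq huv)) => /eqP.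
Qed.

Lemma card_edges_through u v : u != v ->
  #|[set A in edge_set adj | (u \in A) && (v \in A)]| = adj u v.
Proof.
move=> uv.
have edge_uv A : A \in edge_set adj -> u \in A -> v \in A ->
    adj u v /\ A = [set u; v]%SET.
  move=> /edge_setP[x [y [hxy ->]]]; rewrite !inE.
  move=> /orP[] /eqP eu /orP[] /eqP ev; subst; rewrite ?eqxx // in uv *.
  by rewrite (adj_sym y x) finset.setUC.
case huv: (adj u v).
  rewrite (_ : [set _ in _ | _] = [set [set u; v]%SET]) ?cards1 //.
  apply/setP => A; rewrite finset.in_set finset.in_set1; apply/andP/eqP => [[hA /andP[hu hv]]|->].
    by case: (edge_uv A hA hu hv).
  by split; [apply/edge_setP; exists u, v | rewrite !inE !eqxx orbT].
rewrite (_ : [set _ in _ | _] = finset.set0) ?cards0 //.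
apply/setP => A; rewrite finset.in_set finset.in_set0; apply/negP => /andP[hA /andP[hu hv]].
by case: (edge_uv A hA hu hv); rewrite huv.
Qed.

End Edges.

Section Incidence.
Variable R : realType.
Local Notation C := R[i].
Variables (n : nat) (adj : rel 'I_n).
Hypotheses (adj_sym : symmetric adj) (adj_irr : irreflexive adj).

Definition incmx : 'M[C]_(n, #|edge_set adj|) :=
  \matrix_(v, e) (v \in (enum_val e : {set 'I_n}))%:R.

Lemma sum_indicator_card (T : finType) (S : {set T}) :
  \sum_x (x \in S)%:R = #|S|%:R :> C.
Proof.
rewrite -sum1_card natr_sum [RHS]big_mkcond /=.
by apply: eq_bigr => x _; case: (x \in S).
Qed.

Lemma sum_indicator_card_in (T : finType) (S : {set T}) (P : pred T) :
  \sum_(x in S) (P x)%:R = #|[set x in S | P x]|%:R :> C.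
Proof.
rewrite big_mkcond -sum_indicator_card; apply: eq_bigr => x _.
by rewrite finset.in_set; case: (x \in S).
Qed.

Lemma tr_incmx_mul : incmx^T *m incmx = line_graph_adjmx R adj + 2%:M.
Proof.
apply/matrixP => e f; rewrite !mxE.
under eq_bigr do rewrite !mxE -natrM mulnb -finset.in_setI.
rewrite sum_indicator_card.
have [<-|ef] := eqVneq e f.
  by rewrite finset.setIid (card_edge adj_irr (enum_valP e)) /= add0r.
have Eef : enum_val e != enum_val f by apply: contra ef => /eqP/enum_val_inj ->.
have := card_edgeI adj_irr (enum_valP e) (enum_valP f) Eef.
rewrite /= mulr0n addr0 -cards_eq0; by case: #|_| => [|[|]].
Qed.

Lemma incmx_mul_tr : incmx *m incmx^T = signless_laplacian R adj.
Proof.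
apply/matrixP => u v; rewrite !mxE.
under eq_bigr do rewrite !mxE -natrM mulnb.
rewrite -(big_enum_val (fun A : {set 'I_n} => ((u \in A) && (v \in A))%:R)) /=.
rewrite sum_indicator_card_in.
have [<-|uv] := eqVneq u v; last by rewrite card_edges_through // mul0r add0r.
have -> : #|[set k | adj u k]%classic| = #|[set k | adj u k]%SET|.
  by apply: eq_card => k; rewrite finset.in_set unfold_in /= asboolb.
rewrite adj_irr addr0 mul1r -(card_edges_at adj_sym adj_irr).
by congr (_%:R); apply: eq_card => A; rewrite !finset.in_set andbb.
Qed.

Lemma incmx_evec (a b : 'I_n) (e : 'I_#|edge_set adj|) :
  adj a b -> enum_val e = [set a; b]%SET -> incmx *m evec R e = evec R a + evec R b.
Proof.
move=> hab eab; apply/matrixP => v k; rewrite !mxE (bigD1 e) //= big1 => [|f /negPf fe].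
  rewrite !mxE eqxx mulr1 addr0 eab !inE.
  by have [->|_] := eqVneq v a; rewrite ?(negPf (adj_neq adj_irr hab)) ?addr0 ?add0r.
by rewrite !mxE fe mulr0.
Qed.

End Incidence.

Lemma expmx_intertwine (R : realType) m p (A : 'M[R[i]]_m) (B : 'M[R[i]]_p)
    (N : 'M[R[i]]_(m, p)) EA EB :
  A *m N = N *m B -> is_expmx A EA -> is_expmx B EB -> EA *m N = N *m EB.
Proof.
move=> AN hA hB.
have powAN k : A ^+ k *m N = N *m B ^+ k.
  elim: k => [|k IH]; first by rewrite !expr0 mul1mx mulmx1.
  by rewrite !exprSr -!mulmxE -mulmxA AN mulmxA IH -mulmxA.
have partialAN K : expmx_partial A K *m N = N *m expmx_partial B K.
  rewrite mulmx_suml mulmx_sumr; apply: eq_bigr => k _.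
  by rewrite -scalemxAl -scalemxAr powAN.
apply: (mxcvg_unique (mxcvgM hA (mxcvg_cst N))).
rewrite (_ : (fun K => _) = fun K => N *m expmx_partial B K); last exact: funext.
exact: mxcvgM (mxcvg_cst N) hB.
Qed.

Theorem mainTheorem10 (R : realType) (n : nat) (adj : rel 'I_n)
    (a b alpha beta : 'I_n) (i j : 'I_#|edge_set adj|) (tau : R) :
  simple_graph adj ->
  adj a b -> adj alpha beta ->
  enum_val i = [set a; b]%SET -> enum_val j = [set alpha; beta]%SET ->
  pst (line_graph_adjmx R adj) (evec R i) (evec R j) tau ->
  pst (signless_laplacian R adj) (evec R a + evec R b)
      (evec R alpha + evec R beta) tau.
Proof.
move=> [adj_sym adj_irr] hab hab' ei ej [EL [hEL [eta [eta1 ELi]]]].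
set c : R[i] := Complex 0 (- tau); set N := incmx R adj.
have c2J : conjc (c * 2) = - (c * 2).
  by rewrite rmorphM rmorph_nat -mulNr; congr (_ * _); apply/eqP; rewrite eq_complex /= oppr0 !eqxx.
have [w [w1 hw]] := expmx_scalar_unit c2J.
have hLI := expmxD (scalar_mxC _ _) hEL (hw _).
rewrite -scale_scalar_mx -scalerDr -(tr_incmx_mul R adj_irr) in hLI.
have [EQ hEQ] := expmx_exists (c *: signless_laplacian R adj).
exists EQ; split => //; exists (w * eta); split; first by rewrite normrM w1 eta1 mulr1.
have QN : EQ *m N = N *m (EL *m w%:M).
  apply: expmx_intertwine hEQ hLI.
  by rewrite -(incmx_mul_tr R adj_sym adj_irr) -scalemxAl -scalemxAr mulmxA.
rewrite -(incmx_evec R adj_irr hab ei) mulmxA QN mul_mx_scalar -scalemxAr -scalemxAl.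
by rewrite -mulmxA ELi -scalemxAr scalerA (incmx_evec R adj_irr hab' ej).
Qed.
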